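(* Let $\delta\ge 2$ and $n\ge 8\delta$ be integers. Then $\lambda_1\big(D(K_\delta\vee(K_{n-2\delta}+\delta K_1))\big)>n+\delta$, and for every integer $s$ with $\delta+1\le s\le \frac{n-1}{2}$, $$\lambda_1\big(D(K_\delta\vee(K_{n-2\delta}+\delta K_1))\big)<\lambda_1\big(D(K_s\vee(K_{n-2s}+sK_1))\big).$$
   Context: For a connected graph $G$, $D(G)$ is the distance matrix and $\lambda_1(D(G))$ its largest eigenvalue. $K_m$ is the complete graph, $+$ is disjoint union, $sK_1$ is $s$ isolated vertices, $\vee$ is the join (disjoint union plus all edges between the two parts). *)

From HB Require Import structures.
From mathcomp Require Import all_boot all_order all_algebra.
From mathcomp Require Import reals.
Set Implicit Arguments. Unset Strict Implicit. Unset Printing Implicit Defensive.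
Import Order.TTheory GRing.Theory Num.Theory.
Local Open Scope ring_scope.

(* Simple graphs are symmetric irreflexive relations [e : rel T] on a finite
   vertex type [T]. *)

Definition completeG (m : nat) : rel 'I_m := fun x y => x != y.

Definition edgelessG (m : nat) : rel 'I_m := fun _ _ => false.

Definition gunion (T1 T2 : finType) (e1 : rel T1) (e2 : rel T2) : rel (T1 + T2)%type :=
  fun x y => match x, y with
             | inl a, inl b => e1 a b
             | inr a, inr b => e2 a b
             | _, _ => false
             end.

Definition gjoin (T1 T2 : finType) (e1 : rel T1) (e2 : rel T2) : rel (T1 + T2)%type :=
  fun x y => match x, y with
             | inl a, inl b => e1 a b
             | inr a, inr b => e2 a b
             | _, _ => true
             end.

Definition walkb (T : finType) (e : rel T) (u v : T) (k : nat) : bool :=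
  [exists p : k.-tuple T, path e u p && (last u p == v)].

(* graph distance: least k such that a walk of length k from u to v exists
   (for a connected graph this is < #|T|) *)
Definition gdist (T : finType) (e : rel T) (u v : T) : nat :=
  find (walkb e u v) (iota 0 #|T|).

Definition distmx (R : realType) (T : finType) (e : rel T) : 'M[R]_#|T| :=
  \matrix_(i, j) (gdist e (enum_val i) (enum_val j))%:R.

Definition is_lambda1 (R : realType) (m : nat) (A : 'M[R]_m) (l : R) : Prop :=
  eigenvalue A l /\ (forall l' : R, eigenvalue A l' -> l' <= l).

Definition KsG (n s : nat) : rel ('I_s + ('I_((n - 2 * s)%N) + 'I_s))%type :=
  gjoin (@completeG s) (gunion (@completeG (n - 2 * s)%N) (@edgelessG s)).

(* K_s \/ (K_{n-2s} + s K_1) has diameter 2, and its distance matrix is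
   equitably partitioned by the three parts K_s, K_{n-2s} and s K_1, with a
   3x3 quotient matrix Q_s.  A root l > n - s of the cubic det (l - Q_s) lifts
   to an eigenvector of the distance matrix that is positive and constant on
   the parts, and for a symmetric nonnegative matrix such an eigenvalue is the
   largest one.  The cubic for s = delta is negative at n + delta, which puts
   lambda_1 above n + delta; the difference of the cubics for s and delta is
   (s - delta) times a quadratic that is negative from n + delta on, so the
   cubic for s is negative at lambda_1 for delta and has a larger root. *)

From mathcomp Require Import all_boot all_order all_algebra.
From mathcomp Require Import reals.
From mathcomp Require Import ring lra zify.
Import Order.TTheory GRing.Theory Num.Theory.
Set Implicit Arguments. Unset Strict Implicit.

Section WalkDistance.
Variables (T : finType) (e : rel T).

Lemma walkb0 u v : walkb e u v 0 = (u == v).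
Proof.
apply/existsP/idP => [[p]|/eqP <-]; first by rewrite (tuple0 p).
by exists [tuple]; rewrite /= eqxx.
Qed.

Lemma walkb1 u v : walkb e u v 1 = e u v.
Proof.
apply/existsP/idP => [[[[|w [|y p]] //=]]|euv].
  by rewrite andbT => _ /andP[euw /eqP <-].
by exists [tuple v]; rewrite /= euv eqxx.
Qed.

Lemma walkb2 u w v : e u w -> e w v -> walkb e u v 2.
Proof. by move=> euw ewv; apply/existsP; exists [tuple w; v]; rewrite /= euw ewv eqxx. Qed.

Lemma gdist_diam2 u v : (2 < #|T|)%N ->
    (u != v -> ~~ e u v -> exists w, e u w && e w v) ->
  gdist e u v = if u == v then 0 else if e u v then 1 else 2.
Proof.
rewrite /gdist; case: #|T| => [|[|[|k]]] // _ common_nbr /=.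
rewrite walkb0 walkb1; have [//|uv /=] := eqVneq u v.
case: ifP => // /negbT neuv.
by have [w /andP[euw ewv]] := common_nbr uv neuv; rewrite (walkb2 euw ewv).
Qed.

End WalkDistance.

Lemma KsG_sym n s : symmetric (@KsG n s).
Proof. by case=> [a|[a|a]] [b|[b|b]] //=; rewrite /completeG eq_sym. Qed.

Lemma KsG_gdist n s u v : (2 <= s)%N ->
  gdist (@KsG n s) u v = if u == v then 0 else if @KsG n s u v then 1 else 2.
Proof.
move=> s_ge2; apply: gdist_diam2; first by rewrite !card_sum !card_ord; lia.
have s_gt0 : (0 < s)%N by lia.
(* any vertex of K_s is a common neighbour of two nonadjacent vertices *)
case: u => [a|[a|a]]; case: v => [b|[b|b]] //= uv; rewrite /completeG //=;
  try by exists (inl (Ordinal s_gt0)).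
by rewrite uv.
Qed.

Local Open Scope ring_scope.

Lemma is_lambda1_pos_eigenvector (R : realType) (m : nat) (A : 'M[R]_m)
    (x : 'rV[R]_m) (l : R) :
  (0 < m)%N -> A^T = A -> (forall i j, 0 <= A i j) -> (forall i, 0 < x 0 i) ->
  x *m A = l *: x -> is_lambda1 A l.
Proof.
move=> m_gt0 symA A_ge0 x_gt0 xA; split.
  apply/eigenvalueP; exists x => //; apply/eqP => /rowP /(_ (Ordinal m_gt0)).
  by rewrite mxE => x0; move: (x_gt0 (Ordinal m_gt0)); rewrite x0 ltxx.
move=> l' /eigenvalueP [v vA v_neq0].
have Ax i : \sum_j A i j * x 0 j = l * x 0 i.
  have /rowP /(_ i) := xA; rewrite !mxE => <-.
  by apply: eq_bigr => j _; rewrite mulrC -{1}symA mxE.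
have vA_col j : l' * v 0 j = \sum_i v 0 i * A i j.
  by have /rowP /(_ j) := vA; rewrite !mxE => <-.
have [i0 vi0_neq0] : exists i, v 0 i != 0.
  apply/existsP; apply: contraR v_neq0; rewrite negb_exists => /forallP v0.
  by apply/eqP/rowP => j; rewrite mxE; apply/eqP/negPn/v0.
have vx_gt0 : 0 < \sum_i `|v 0 i| * x 0 i.
  rewrite (bigD1 i0) //=; apply: ltr_wpDr; last by rewrite mulr_gt0 ?normr_gt0.
  by apply: sumr_ge0 => i _; rewrite mulr_ge0 // ltW.
(* triangle inequality on [v A = l' v], then [A x = l x] after exchanging the sums *)
have : `|l'| * \sum_i `|v 0 i| * x 0 i <= l * \sum_i `|v 0 i| * x 0 i.
  rewrite mulr_sumr (eq_bigr (fun j => `|\sum_i v 0 i * A i j| * x 0 j)); last first.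
    by move=> j _; rewrite -vA_col normrM mulrA.
  apply: le_trans (_ : \sum_j (\sum_i `|v 0 i| * A i j) * x 0 j <= _).
    apply: ler_sum => j _; apply: ler_wpM2r; first exact: ltW.
    apply: le_trans (ler_norm_sum _ _ _) _.
    by apply: ler_sum => i _; rewrite normrM (ger0_norm (A_ge0 _ _)).
  under eq_bigr do rewrite mulr_suml.
  rewrite exchange_big mulr_sumr; apply: ler_sum => i _ /=.
  rewrite mulrCA -Ax mulr_sumr le_eqVlt; apply/orP; left; apply/eqP.
  by apply: eq_bigr => j _; rewrite mulrA.
by rewrite ler_pM2r // => /(le_trans (ler_norm l')).
Qed.

Section WeightedSums.
Variable R : comPzRingType.

Lemma sum_ord_const (k : nat) (c : R) (F : 'I_k -> R) :
  (forall a, F a = c) -> \sum_a F a = k%:R * c.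
Proof. by move=> Fc; rewrite (eq_bigr _ (fun a _ => Fc a)) sumr_const card_ord mulr_natl. Qed.

Lemma sum_ord_const_off (k : nat) (j : 'I_k) (c : R) (F : 'I_k -> R) :
  (forall a, a != j -> F a = c) -> F j = 0 -> \sum_a F a = (k%:R - 1) * c.
Proof.
move=> Fc Fj; rewrite (bigD1 j) //= Fj add0r.
rewrite (eq_bigr (fun _ => c)); last by move=> a /Fc.
have := @sum_ord_const k c (fun => c) (fun => erefl).
by rewrite (bigD1 j) //= => /(canRL (addKr c)) ->; rewrite mulrBl mul1r addrC.
Qed.

Definition part_weight (T1 T2 T3 : Type) (a b c : R) (u : T1 + (T2 + T3)) : R :=
  match u with inl _ => a | inr (inl _) => b | inr (inr _) => c end.

Lemma KsG_weighted_colsum n s (a b c : R) v : (2 <= s)%N ->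
  \sum_u part_weight a b c u * (gdist (@KsG n s) u v)%:R =
  let S := s%:R in let B := (n - 2 * s)%N%:R in
  part_weight ((S - 1) * a + B * b + S * c)
              (S * a + (B - 1) * b + S * (2 * c))
              (S * a + B * (2 * b) + (S - 1) * (2 * c)) v.
Proof.
move=> s_ge2; rewrite big_sumType big_sumType /=.
have dist u : gdist (@KsG n s) u v = _ := KsG_gdist u v s_ge2.
case: v dist => [j|[j|j]] dist /=.
- rewrite (sum_ord_const_off (j := j) (c := a)); last 2 first.
  + by move=> i ij; rewrite dist /eq_op /= (negbTE ij) /= /completeG ij mulr1.
  + by rewrite dist eqxx mulr0.
  rewrite (sum_ord_const (c := b)) ?(sum_ord_const (c := c)) ?addrA // => i;
    by rewrite dist mulr1.
- rewrite (sum_ord_const (c := a)); last by move=> i; rewrite dist mulr1.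
  rewrite (sum_ord_const_off (j := j) (c := b)); last 2 first.
  + by move=> i ij; rewrite dist /eq_op /= /eq_op /= (negbTE ij) /= /completeG ij mulr1.
  + by rewrite dist eqxx mulr0.
  by rewrite (sum_ord_const (c := 2 * c)) ?addrA // => i; rewrite dist mulrC.
- rewrite (sum_ord_const (c := a)); last by move=> i; rewrite dist mulr1.
  rewrite (sum_ord_const (c := 2 * b)); last by move=> i; rewrite dist mulrC.
  rewrite (sum_ord_const_off (j := j) (c := 2 * c)) ?addrA //.
  + by move=> i ij; rewrite dist /eq_op /= /eq_op /= (negbTE ij) mulrC.
  + by rewrite dist eqxx mulr0.
Qed.
End WeightedSums.

Section CharacteristicPolynomial.
Variable R : realDomainType.

(* [ks_charpoly S B l] is det (l - Q) for the quotient matrix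
   Q = [[S-1, B, S], [S, B-1, 2S], [S, 2B, 2S-2]] of the distance matrix of
   K_s \/ (K_b + s K_1) (with S = s, B = b), and [ks_cofactor S B l] is the
   (3,3) cofactor of l - Q. *)
Definition ks_cofactor (S B l : R) : R :=
  (l - S + 1) * (l + B + 1) - B * (2 * l - S + 2).

Definition ks_charpoly (S B l : R) : R :=
  (l - 2 * S + 2) * ks_cofactor S B l - S ^+ 2 * (l + B + 1)
  - 2 * B * S * (2 * l - S + 2).

Lemma ks_charpoly_delta_lt0 (D N : R) :
  2 <= D -> 8 * D <= N -> ks_charpoly D (N - 2 * D) (N + D) < 0.
Proof.
move=> D_ge2 N_ge; set e := D - 2; set k := N - 8 * D.
have e_ge0 : 0 <= e by rewrite /e; lra.
have k_ge0 : 0 <= k by rewrite /k; lra.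
have -> : D = e + 2 by rewrite /e; ring.
have -> : N = 8 * e + 16 + k by rewrite /e /k; ring.
rewrite /ks_charpoly /ks_cofactor.
have := mulr_ge0 (mulr_ge0 e_ge0 e_ge0) e_ge0.
have := mulr_ge0 (mulr_ge0 e_ge0 e_ge0) k_ge0.
have := mulr_ge0 (mulr_ge0 e_ge0 k_ge0) k_ge0.
have := mulr_ge0 (mulr_ge0 k_ge0 k_ge0) k_ge0.
have := mulr_ge0 e_ge0 e_ge0; have := mulr_ge0 e_ge0 k_ge0.
have := mulr_ge0 k_ge0 k_ge0.
nra.
Qed.

Lemma ks_charpoly_3N_gt0 (S N : R) :
  1 <= S -> 2 * S + 1 <= N -> 0 < ks_charpoly S (N - 2 * S) (3 * N).
Proof.
move=> S_ge1 N_ge; set e := S - 1; set g := N - 2 * S - 1.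
have e_ge0 : 0 <= e by rewrite /e; lra.
have g_ge0 : 0 <= g by rewrite /g; lra.
have -> : S = e + 1 by rewrite /e; ring.
have -> : N = 2 * e + 3 + g by rewrite /e /g; ring.
rewrite /ks_charpoly /ks_cofactor.
have := mulr_ge0 (mulr_ge0 e_ge0 e_ge0) e_ge0.
have := mulr_ge0 (mulr_ge0 e_ge0 e_ge0) g_ge0.
have := mulr_ge0 (mulr_ge0 e_ge0 g_ge0) g_ge0.
have := mulr_ge0 (mulr_ge0 g_ge0 g_ge0) g_ge0.
have := mulr_ge0 e_ge0 e_ge0; have := mulr_ge0 e_ge0 g_ge0.
have := mulr_ge0 g_ge0 g_ge0.
nra.
Qed.

Lemma ks_charpoly_subE (S D N x : R) :
  ks_charpoly S (N - 2 * S) x - ks_charpoly D (N - 2 * D) x =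
  (S - D) * (- x ^+ 2 + (5 * (S + D) - 2 * N - 1) * x
             - 2 * (S ^+ 2 + S * D + D ^+ 2) + (S + D) * N + 5 * (S + D) - 2 * N).
Proof. by rewrite /ks_charpoly /ks_cofactor; ring. Qed.

Lemma ks_charpoly_lt0_at_root (S D N x : R) :
  2 <= D -> D + 1 <= S -> 2 * S + 1 <= N -> 8 * D <= N -> N + D <= x ->
  ks_charpoly D (N - 2 * D) x = 0 -> ks_charpoly S (N - 2 * S) x < 0.
Proof.
move=> D_ge2 S_ge N_geS N_geD x_ge root_x.
rewrite -[ks_charpoly S _ x]subr0 -[X in _ - X]root_x ks_charpoly_subE.
rewrite pmulr_rlt0; last by lra.
set e := D - 2; set f := S - D - 1; set g := N - 2 * S - 1; set y := x - N - D.
have e_ge0 : 0 <= e by rewrite /e; lra.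
have f_ge0 : 0 <= f by rewrite /f; lra.
have g_ge0 : 0 <= g by rewrite /g; lra.
have y_ge0 : 0 <= y by rewrite /y; lra.
have m_ge0 : 0 <= 2 * f + g - 6 * e - 9 by rewrite /e /f /g; lra. (* = N - 8 D *)
have -> : D = e + 2 by rewrite /e; ring.
have -> : S = e + f + 3 by rewrite /e /f; ring.
have -> : N = 2 * e + 2 * f + g + 7 by rewrite /e /f /g; ring.
have -> : x = 3 * e + 2 * f + g + y + 9 by rewrite /e /f /g /y; ring.
have := mulr_ge0 m_ge0 e_ge0; have := mulr_ge0 m_ge0 f_ge0.
have := mulr_ge0 e_ge0 f_ge0; have := mulr_ge0 e_ge0 g_ge0.
have := mulr_ge0 f_ge0 g_ge0; have := mulr_ge0 g_ge0 g_ge0.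
have := mulr_ge0 f_ge0 y_ge0; have := mulr_ge0 g_ge0 y_ge0.
have := mulr_ge0 y_ge0 y_ge0.
nra.
Qed.

End CharacteristicPolynomial.

Lemma ks_charpoly_root_between (R : rcfType) (S B a b : R) :
  a <= b -> ks_charpoly S B a < 0 -> 0 < ks_charpoly S B b ->
  exists2 l, a < l <= b & ks_charpoly S B l = 0.
Proof.
move=> ab Pa_lt0 Pb_gt0.
pose p : {poly R} := ('X - (2 * S - 2)%:P) * (('X - (S - 1)%:P) * ('X + B%:P + 1)
   - B%:P * (2%:P * 'X - (S - 2)%:P)) - (S ^+ 2)%:P * ('X + B%:P + 1)
   - (2 * B * S)%:P * (2%:P * 'X - (S - 2)%:P).
have pE x : p.[x] = ks_charpoly S B x by rewrite /p !hornerE /ks_charpoly /ks_cofactor; ring.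
have [|l /andP[al lb] /rootP] := @poly_ivt R p a b ab.
  by rewrite !pE; apply/andP; split; apply: ltW.
rewrite pE => Pl0; exists l => //; rewrite lb andbT lt_neqAle al andbT.
by apply: contraTneq Pa_lt0 => ->; rewrite Pl0 ltxx.
Qed.

Section KsGSpectralRadius.
Variable R : realType.

Lemma KsG_lambda1 n s (l : R) : (2 <= s)%N -> (2 * s <= n)%N ->
  n%:R - s%:R < l -> ks_charpoly s%:R (n%:R - 2 * s%:R) l = 0 ->
  is_lambda1 (distmx R (@KsG n s)) l.
Proof.
move=> s_ge2 n_ge l_gt char_l.
have B_E : (n - 2 * s)%N%:R = n%:R - 2 * s%:R :> R by rewrite natrB // natrM.
set S : R := s%:R; set B : R := (n - 2 * s)%N%:R.
have S_ge2 : 2 <= S by rewrite /S ler_nat.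
have B_ge0 : 0 <= B by rewrite /B ler0n.
rewrite -/S -B_E -/B in l_gt char_l.
(* the cofactors along the last row of [l - Q] form a null vector of [l - Q] *)
set a := S * (l + B + 1); set b := S * (2 * l - S + 2); set c := ks_cofactor S B l.
have a_gt0 : 0 < a by rewrite /a; nra.
have b_gt0 : 0 < b by rewrite /b; nra.
have c_gt0 : 0 < c by rewrite /c /ks_cofactor; nra.
have colsum v : \sum_u part_weight a b c u * (gdist (@KsG n s) u v)%:R =
                l * part_weight a b c v.
  rewrite KsG_weighted_colsum //; case: v => [j|[j|j]] /=; rewrite -/S -/B.
  - by rewrite /a /b /c /ks_cofactor; ring.
  - by rewrite /a /b /c /ks_cofactor; ring.
  - apply/eqP; rewrite -subr_eq0 -oppr_eq0 -char_l; apply/eqP.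
    by rewrite /a /b /c /ks_charpoly /ks_cofactor; ring.
apply: (@is_lambda1_pos_eigenvector _ _ _ (\row_i part_weight a b c (enum_val i))).
- by rewrite !card_sum !card_ord; lia.
- by apply/matrixP => i j; rewrite !mxE !KsG_gdist // eq_sym KsG_sym.
- by move=> i j; rewrite mxE ler0n.
- by move=> i; rewrite mxE; case: (enum_val i) => [?|[?|?]].
apply/rowP => j; rewrite !mxE -colsum.
under eq_bigr do rewrite !mxE.
rewrite -(big_enum_val (A := predT)
  (fun u => part_weight a b c u * (gdist (@KsG n s) u (enum_val j))%:R)).
by apply: eq_bigl.
Qed.

Lemma KsG_lambda1_above n s (a : R) : (2 <= s)%N -> (2 * s < n)%N ->
  n%:R - s%:R <= a -> a <= 3 * n%:R -> ks_charpoly s%:R (n%:R - 2 * s%:R) a < 0 ->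
  exists l, [/\ a < l, l <= 3 * n%:R, ks_charpoly s%:R (n%:R - 2 * s%:R) l = 0
             & is_lambda1 (distmx R (@KsG n s)) l].
Proof.
move=> s_ge2 n_gt a_ge a_le char_a.
have S_ge1 : 1 <= s%:R :> R by rewrite ler1n; lia.
have N_ge : 2 * s%:R + 1 <= n%:R :> R.
  by rewrite -natrM natr1 ler_nat; lia.
have [l /andP[a_lt l_le] char_l] :=
  ks_charpoly_root_between a_le char_a (ks_charpoly_3N_gt0 S_ge1 N_ge).
exists l; split => //; apply: KsG_lambda1 => //; [lia | lra].
Qed.

End KsGSpectralRadius.

Theorem mainTheorem4 (R : realType) (delta n : nat) :
  (2 <= delta)%N -> (8 * delta <= n)%N ->
  exists l1 : R,
    is_lambda1 (@distmx R _ (@KsG n delta)) l1 /\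
    (n + delta)%:R < l1 /\
    (forall s : nat, (delta.+1 <= s)%N -> (2 * s <= n - 1)%N ->
       exists l2 : R, is_lambda1 (@distmx R _ (@KsG n s)) l2 /\ l1 < l2).
Proof.
move=> delta_ge2 n_ge; rewrite natrD.
have D_ge2 : 2 <= delta%:R :> R by rewrite ler_nat.
have N_ge : 8 * delta%:R <= n%:R :> R by rewrite -natrM ler_nat.
have [l1 [l1_gt l1_le char_l1 lambda_l1]] :=
  KsG_lambda1_above (n := n) (a := n%:R + delta%:R) delta_ge2 ltac:(lia) ltac:(lra) ltac:(lra)
    (ks_charpoly_delta_lt0 D_ge2 N_ge).
exists l1; split=> //; split=> // s s_gt s_le.
have S_ge : delta%:R + 1 <= s%:R :> R by rewrite natr1 ler_nat.
have N_geS : 2 * s%:R + 1 <= n%:R :> R by rewrite -natrM natr1 ler_nat; lia.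
have [l2 [l2_gt _ _ lambda_l2]] :=
  KsG_lambda1_above (n := n) (s := s) (a := l1) ltac:(lia) ltac:(lia) ltac:(lra) l1_le
    (ks_charpoly_lt0_at_root D_ge2 S_ge N_geS N_ge (ltW l1_gt) char_l1).
by exists l2.
Qed.
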